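(* Let $k\in\mathbb{N}$, let $f^{(0)}_n,f^{(1)}_n,\dots,f^{(k+1)}_n$ be functions of $n\in\mathbb{Z}$, fix $n_1,\dots,n_{k+1}\in\mathbb{Z}$, and let $$F_n=\sum_{j=1}^{k+1}(-1)^{k+1+j}f^{(j)}_n\int_{n_j}^{n}f^{(0)}_s\,\mathrm{Wr}_s\big(f^{(1)}_s,\dots,\widehat{f^{(j)}_s},\dots,f^{(k+1)}_s\big)\,d\mu_{\mathrm{d}}(s),$$ where the hatted term is omitted. Then $$\mathrm{Wr}_n\big(f^{(1)}_n,\dots,f^{(k)}_n,F_n\big)=\int_{n_{k+1}}^{n-1}f^{(0)}_s\,\mathrm{Wr}_s\big(f^{(1)}_s,\dots,f^{(k)}_s\big)\,d\mu_{\mathrm{d}}(s)\;\cdot\;\mathrm{Wr}_n\big(f^{(1)}_n,\dots,f^{(k+1)}_n\big).$$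
   Context: Discrete Wronskian: $\mathrm{Wr}_n(g^{(1)}_n,\dots,g^{(m)}_n)=\det\big(g^{(i)}_{n-j+1}\big)_{1\le i,j\le m}$. Discrete integral: for $m,n\in\mathbb{Z}$ and a function $f$ on $\mathbb{Z}$, $\int_m^n f(s)\,d\mu_{\mathrm{d}}(s)=\sum_{s=m+1}^n f(s)$ if $n>m$, $=0$ if $n=m$, and $=-\sum_{s=n+1}^{m}f(s)$ if $n<m$. *)

From HB Require Import structures.
From mathcomp Require Import all_boot all_order all_algebra.
Set Implicit Arguments. Unset Strict Implicit. Unset Printing Implicit Defensive.
Import Order.TTheory GRing.Theory Num.Theory.
Local Open Scope ring_scope.

(* Discrete Wronskian of m functions g 0, ..., g (m-1) : int -> R at n:
   Wr_n = det (g i (n - j))_{0 <= i, j < m}  (= det(g^{(i)}_{n-j+1})_{1<=i,j<=m}). *)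
Definition dWr (R : comNzRingType) (m : nat) (g : nat -> int -> R) (n : int) : R :=
  \det (\matrix_(i < m, j < m) g i (n - (j : nat)%:Z)).

Definition dint (R : comNzRingType) (m n : int) (f : int -> R) : R :=
  if (m <= n)%R then \sum_(i < `|n - m|%N) f (m + 1 + (i : nat)%:Z)
  else - \sum_(i < `|m - n|%N) f (n + 1 + (i : nat)%:Z).

(* Here the summation index jj = j - 1 ranges over 0..k; the Wronskian of the
   family with f^{(j)} omitted takes, at position i (0 <= i < k), the function
   f^{(i+1)} if i+1 < j and f^{(i+2)} otherwise. *)
Definition Fn (R : comNzRingType) (k : nat) (f : nat -> int -> R) (nn : nat -> int)
  (n : int) : R :=
  \sum_(jj < k.+1)
     (-1) ^+ (k.+1 + jj.+1) * f jj.+1 n *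
     dint (nn jj.+1) n
       (fun s => f 0%N s *
          dWr k (fun i => f (if (i < jj)%N then i.+1 else i.+2)) s).

From HB Require Import structures.
From mathcomp Require Import all_boot all_order all_algebra zify.
Set Implicit Arguments. Unset Strict Implicit. Unset Printing Implicit Defensive.
Import Order.TTheory GRing.Theory Num.Theory.
Local Open Scope ring_scope.

(* Moving the upper limit of the [j]-th integral in [F] from [x] to [n - 1]
   changes [F x] by a sum over [s] between [x] and [n - 1] of [f 0 s] times a
   cofactor expansion along the last column: the determinant with columns
   [f(s), f(s - 1), ..., f(s - k + 1), f(x)].  For [n - k <= x <= n] the value
   [x] is one of [s, ..., s - k + 1], so that determinant has two equal columns.
   Hence on the window [n - k, ..., n] the function [F] is a combination of
   [f 1, ..., f k.+1] with constant coefficients, the Wronskian of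
   [f 1, ..., f k, F] factors as a triangular matrix times that of
   [f 1, ..., f k.+1], and the triangular determinant is the coefficient of
   [f k.+1], the integral of [f 0 * Wr(f 1, ..., f k)] up to [n - 1]. *)

Section DiscreteIntegral.
Variable R : comNzRingType.
Implicit Types (a b c y : int) (g h : int -> R).

Lemma eq_dint a b g h : g =1 h -> dint a b g = dint a b h.
Proof.
by move=> gh; rewrite /dint; case: ifP => _; [|congr (- _)];
  apply: eq_bigr => i _; rewrite gh.
Qed.

Lemma dint_id a g : dint a a g = 0.
Proof. by rewrite /dint lexx subrr big_ord0. Qed.

Lemma dint_addn a (m : nat) g :
  dint a (a + m%:Z) g = \sum_(i < m) g (a + 1 + i%:Z).
Proof.
rewrite /dint ifT; last lia.
by have -> : absz (a + m%:Z - a)%R = m by lia.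
Qed.

Lemma dint_addnN a (m : nat) g : dint (a + m%:Z) a g = - dint a (a + m%:Z) g.
Proof.
rewrite dint_addn /dint; case: m => [|m]; first by rewrite addr0 lexx subrr !big_ord0 oppr0.
rewrite ifF; last lia.
by have -> : absz (a + m.+1%:Z - a)%R = m.+1 by lia.
Qed.

Lemma dint_step a y g : dint a (y + 1) g = dint a y g + g (y + 1).
Proof.
have [[m ->]|[m ->]] : (exists m : nat, y = a + m%:Z) \/ (exists m : nat, a = y + 1 + m%:Z).
  by case: (lerP a y) => ay; [left; exists (absz (y - a)%R) | right; exists (absz (a - y - 1)%R)]; lia.
- have -> : a + m%:Z + 1 = a + m.+1%:Z by lia.
  rewrite !dint_addn big_ord_recr /=; congr (_ + g _); lia.
- rewrite dint_addnN dint_addn (_ : y + 1 + m%:Z = y + m.+1%:Z); last lia.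
  rewrite dint_addnN dint_addn big_ord_recl /= addr0 opprD [RHS]addrAC addNr add0r.
  congr (- _); apply: eq_bigr => i _; congr g; rewrite /bump /=; lia.
Qed.

Lemma shift_invariant_const (Q : int -> R) :
  (forall y, Q (y + 1) = Q y) -> forall a b, Q b = Q a.
Proof.
move=> Q1 a b; rewrite -(subrKC a b); elim/int_rec: (b - a) => [|m IH|m IH].
- by rewrite addr0.
- by rewrite -IH (_ : a + m.+1%:Z = a + m%:Z + 1) ?Q1 //; lia.
- by rewrite -IH (_ : a + - m%:Z = a + - m.+1%:Z + 1) ?Q1 //; lia.
Qed.

Lemma dint_chasles a b c g : dint a b g + dint b c g = dint a c g.
Proof.
have Q1 y : dint a (y + 1) g - dint b (y + 1) g = dint a y g - dint b y g.
  by rewrite !dint_step opprD addrACA subrr addr0.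
have /= Qc := shift_invariant_const Q1 b c.
by rewrite -(subrK (dint b c g) (dint a c g)) Qc dint_id subr0.
Qed.

Lemma dint_sumr (I : finType) a b (u : I -> R) (G : I -> int -> R) :
  \sum_j u j * dint a b (G j) = dint a b (fun s => \sum_j u j * G j s).
Proof.
rewrite /dint; case: ifP => _.
  by under eq_bigr do rewrite mulr_sumr; rewrite exchange_big.
under eq_bigr do rewrite mulrN mulr_sumr; by rewrite sumrN exchange_big.
Qed.

Lemma dint_eq0 a b g :
  (forall s, (a < s <= b) || (b < s <= a) -> g s = 0) -> dint a b g = 0.
Proof.
move=> g0; rewrite /dint; case: ifP => hab; rewrite ?big1 ?oppr0 // => i _;
  by apply: g0; have := ltn_ord i; lia.
Qed.

End DiscreteIntegral.

Section Wronskian.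
Variable R : comNzRingType.

Lemma eq_dWr (m : nat) (g h : nat -> int -> R) n :
  (forall i s, (i < m)%N -> g i s = h i s) -> dWr m g n = dWr m h n.
Proof. by move=> gh; congr (\det _); apply/matrixP => i j; rewrite !mxE gh. Qed.

Lemma dWr_expand_lastcol (k : nat) (f : nat -> int -> R) (x s : int) :
  \sum_(jj < k.+1) (-1) ^+ (k.+1 + jj.+1) * f jj.+1 x *
     dWr k (fun i => f (if (i < jj)%N then i.+1 else i.+2)) s =
  \det (\matrix_(i < k.+1, j < k.+1) f i.+1 (if (j < k)%N then s - (j : nat)%:Z else x)).
Proof.
rewrite (expand_det_col _ ord_max); apply: eq_bigr => i _.
rewrite mxE /cofactor /= ltnn -mulrA [RHS]mulrCA; congr (_ * (_ * _)).
  by rewrite addSn addnS !exprS mulrA mulrNN !mul1r addnC.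
congr (\det _); apply/matrixP => a b; rewrite !mxE /=.
have -> : bump k b = b by rewrite /bump leqNgt ltn_ord.
by rewrite ltn_ord /bump; case: ltnP.
Qed.

Lemma dWr_expand_lastcol_eq0 (k : nat) (f : nat -> int -> R) (x s : int) :
  x <= s < x + k%:Z ->
  \sum_(jj < k.+1) (-1) ^+ (k.+1 + jj.+1) * f jj.+1 x *
     dWr k (fun i => f (if (i < jj)%N then i.+1 else i.+2)) s = 0.
Proof.
move=> hxs; have hd : (absz (s - x)%R < k)%N by lia.
rewrite dWr_expand_lastcol -det_tr.
have hd' : (absz (s - x)%R < k.+1)%N by lia.
apply: (@determinant_alternate _ _ _ (Ordinal hd') ord_max).
  by rewrite -val_eqE /= neq_ltn hd.
move=> j; rewrite !mxE /= hd ltnn; congr f; lia.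
Qed.

End Wronskian.

Lemma det_lastrow_lincomb (R : comNzRingType) (k : nat) (B : 'M[R]_k.+1) (v : 'rV[R]_k.+1) :
  \det (\matrix_(i, j) if (i < k)%N then B i j else (v *m B) 0 j) = v 0 ord_max * \det B.
Proof.
pose M := \matrix_(i, l) if (i < k)%N then (i == l)%:R else v 0 l.
have -> : \matrix_(i, j) (if (i < k)%N then B i j else (v *m B) 0 j) = M *m B.
  apply/matrixP => i j; rewrite !mxE; case: ifP => hi; last first.
    by apply: eq_bigr => l _; rewrite !mxE hi.
  rewrite (bigD1 i) //= big1 => [|l /negPf nil]; rewrite !mxE hi.
    by rewrite eqxx mul1r addr0.
  by rewrite eq_sym nil mul0r.
rewrite det_mulmx det_trig; last first.
  apply/is_trig_mxP => i j ij; rewrite mxE ifT; last by have := ltn_ord j; lia.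
  by rewrite -val_eqE ltn_eqF.
by rewrite big_ord_recr /= big1 => [|i _]; rewrite !mxE ?ltnn ?mul1r // (ltn_ord i) eqxx.
Qed.

Lemma Fn_rebase (R : comNzRingType) (k : nat) (f : nat -> int -> R)
    (nn : nat -> int) (n x : int) :
  (0 < k)%N -> n - k%:Z <= x <= n ->
  Fn k f nn x =
  \sum_(jj < k.+1) (-1) ^+ (k.+1 + jj.+1) * f jj.+1 x *
     dint (nn jj.+1) (n - 1)
       (fun s => f 0%N s * dWr k (fun i => f (if (i < jj)%N then i.+1 else i.+2)) s).
Proof.
move=> k_gt0 hx; apply/subr0_eq; rewrite -sumrB.
under eq_bigr do rewrite -mulrBr -(dint_chasles _ (n - 1)) addrAC subrr add0r.
rewrite dint_sumr; apply: dint_eq0 => s hs.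
under eq_bigr do rewrite mulrCA; rewrite -mulr_sumr dWr_expand_lastcol_eq0 ?mulr0 //; lia.
Qed.

Theorem lemma4p2 (R : comNzRingType) (k : nat) (f : nat -> int -> R)
  (nn : nat -> int) (n : int) (hk : (0 < k)%N) :
  dWr k.+1 (fun i => if (i < k)%N then f i.+1 else Fn k f nn) n =
  dint (nn k.+1) (n - 1) (fun s => f 0%N s * dWr k (fun i => f i.+1) s)
    * dWr k.+1 (fun i => f i.+1) n.
Proof.
pose v := \row_(l < k.+1) ((-1) ^+ (k.+1 + l.+1) *
  dint (nn l.+1) (n - 1)
    (fun s => f 0%N s * dWr k (fun i => f (if (i < l)%N then i.+1 else i.+2)) s)).
pose B := \matrix_(i < k.+1, j < k.+1) f i.+1 (n - (j : nat)%:Z).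
have -> : dWr k.+1 (fun i => if (i < k)%N then f i.+1 else Fn k f nn) n =
    \det (\matrix_(i, j) if (i < k)%N then B i j else (v *m B) 0 j).
  congr (\det _); apply/matrixP => i j; rewrite !mxE; case: ifP => // _.
  have hj : n - k%:Z <= n - (j : nat)%:Z <= n by move: (ltn_ord j); clear; lia.
  rewrite (Fn_rebase f nn hk hj).
  by apply: eq_bigr => l _; rewrite !mxE mulrAC.
rewrite det_lastrow_lincomb mxE addnn -muln2 exprM sqrr_sign mul1r.
congr (_ * _); apply: eq_dint => s; congr (_ * _).
by apply: eq_dWr => i t ik; rewrite ik.
Qed.
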